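(* Let $q>0$, $x\in\mathbb{R}$ with $|x|<q$, and $\ell\in\{0,1,2,\ldots\}$. Then $$\tilde\gamma_\ell(q+x)=\tilde\gamma_\ell(q)+(-1)^\ell\sum_{j=2}^\infty\frac{x^{j-1}}{(j-1)!}\sum_{k=0}^{\ell}\binom{\ell}{k}(-1)^k k!\, s(j,k+1)\,\zeta_E^{(\ell-k)}(j,q).$$
   Context: For $q>0$, $\zeta_E(z,q)=\sum_{n=0}^\infty (-1)^n (n+q)^{-z}$ for $\mathrm{Re}(z)>0$, extended by analytic continuation to an entire function of $z$; $\zeta_E^{(m)}(z,q)$ denotes $\frac{\partial^m}{\partial z^m}\zeta_E(z,q)$. The modified Stieltjes constants $\tilde\gamma_k(q)$ are defined by the Taylor expansion $\zeta_E(z,q)=\sum_{k=0}^\infty\frac{(-1)^k\tilde\gamma_k(q)}{k!}(z-1)^k$. $s(n,k)$ are the (signed) Stirling numbers of the first kind: $x(x-1)\cdots(x-n+1)=\sum_{k=0}^n s(n,k)x^k$. *)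

From Stdlib Require Import Reals Lra Lia.
From Coquelicot Require Import Coquelicot.
Open Scope R_scope.

(* Alternating Hurwitz zeta function, restricted to real z > 0, where
   zeta_E(z,q) = sum_{n>=0} (-1)^n (n+q)^{-z} converges (q > 0).
   The entire function of the paper coincides with this on (0,+oo). *)
Definition zetaE (z q : R) : R :=
  Series (fun n : nat => (-1) ^ n * Rpower (INR n + q) (- z)).

(* m-th derivative in z:  zeta_E^{(m)}(z,q).  Since zeta_E(.,q) is entire,
   its derivatives at real points z > 0 equal the real derivatives of the
   restriction to the open half-line (0,+oo). *)
Definition zetaE_deriv (m : nat) (z q : R) : R :=
  Derive_n (fun s => zetaE s q) m z.

(* Modified Stieltjes constants: from the Taylor expansion
   zeta_E(z,q) = sum_k (-1)^k gt_k(q)/k! (z-1)^k we read off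
   (-1)^k gt_k(q) / k! = zeta_E^{(k)}(1,q) / k!, i.e. gt_k(q) = (-1)^k zeta_E^{(k)}(1,q). *)
Definition mod_stieltjes (k : nat) (q : R) : R :=
  (-1) ^ k * zetaE_deriv k 1 q.

Fixpoint stirling1 (n k : nat) : R :=
  match n, k with
  | O, O => 1
  | O, S _ => 0
  | S _, O => 0
  | S n', S k' => stirling1 n' k' - INR n' * stirling1 n' (S k')
  end.

Fixpoint falling (x : R) (n : nat) : R :=
  match n with
  | O => 1
  | S n' => falling x n' * (x - INR n')
  end.

Lemma stirling1_zero n k : (n < k)%nat -> stirling1 n k = 0.
Proof.
  revert k; induction n as [|n IH]; intros [|k] H; simpl; try lia; try reflexivity.
  rewrite !IH by lia. ring.
Qed.
Lemma stirling1_gen n : forall N x, (n <= N)%nat ->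
  sum_f_R0 (fun k => stirling1 n k * x ^ k) N = falling x n.
Proof.
  induction n as [|n IH]; intros N x HN.
  - simpl. induction N as [|N IHN]; simpl. ring.
    rewrite IHN by lia. ring.
  - destruct N as [|N]; [lia|].
    rewrite decomp_sum by lia. simpl stirling1 at 1.
    replace (sum_f_R0 (fun i => stirling1 (S n) (S i) * x ^ S i) (Init.Nat.pred (S N)))
      with (x * sum_f_R0 (fun i => stirling1 n i * x ^ i) N
            - INR n * (sum_f_R0 (fun i => stirling1 n i * x ^ i) (S N) - stirling1 n 0)).
    + rewrite IH by lia. rewrite IH by lia. simpl falling.
      destruct n; simpl; ring.
    + simpl pred. rewrite tech5. rewrite (stirling1_zero n (S N)) by lia.
      assert (E: forall M, sum_f_R0 (fun i => stirling1 n i * x ^ i) (S M) - stirling1 n 0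
        = sum_f_R0 (fun i => stirling1 n (S i) * x ^ S i) M).
      { intro M. rewrite decomp_sum by lia. simpl. ring. }
      replace (sum_f_R0 (fun i => stirling1 n i * x ^ i) N + 0 * x ^ S N - stirling1 n 0)
        with (sum_f_R0 (fun i => stirling1 n i * x ^ i) N - stirling1 n 0) by ring.
      destruct N.
      * assert (n = 0)%nat by lia. subst n. simpl. ring.
      * rewrite E.
        rewrite (sum_eq (fun i => stirling1 (S n) (S i) * x ^ S i)
           (fun i => (stirling1 n i * x ^ i) * x + (stirling1 n (S i) * x ^ S i) * (- INR n)))
          by (intros i _; simpl; ring).
        rewrite plus_sum, <- !scal_sum.
        rewrite (tech5 (fun i => stirling1 n (S i) * x ^ S i) N).
        rewrite (stirling1_zero n (S (S N))) by lia. ring.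
Qed.

Lemma stirling1_defining n x :
  sum_f_R0 (fun k => stirling1 n k * x ^ k) n = falling x n.
Proof. apply stirling1_gen; lia. Qed.

(* Grouping the terms of zeta_E(w, y) in consecutive pairs (2k+y)^-w - (2k+y+1)^-w gives a
   series that converges absolutely, locally uniformly in w > 0 (mean value theorem in the
   base, then a p-series), so it may be differentiated termwise: zeta_E^(r)(w, y) is the
   paired series of (-ln t)^r t^-w.  For w = 1 the summand f(t) = (-ln t)^l / t has m-th
   derivative t^-(m+1) sum_c C(l,c) (-1)^c c! s(m+1,c+1) (-ln t)^(l-c), by the recurrence of
   the Stirling numbers, and the Lagrange remainder shows that the Taylor series of f at
   a > 0 converges to f on (0, 2a).  Expanding both terms of every pair of
   zeta_E^(l)(1, q + x) around 2k+q and 2k+q+1 gives a double series whose (k, i) term is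
   bounded by (i+1)(i+2) (|x|/q)^i |x| times O((2k+q)^-3/2), so the two summations may be
   exchanged; summing over k first turns the coefficient of x^(j-1)/(j-1)! into the paired
   series of zeta_E^(l-k)(j, q). *)

From Stdlib Require Import Reals Factorial Binomial Lra Lia ZArith.
From Coquelicot Require Import Coquelicot.
Open Scope R_scope.

Lemma exp_le_exp_of_le (x y : R) : x <= y -> exp x <= exp y.
Proof. intros [H|H]; [left; apply exp_increasing, H | subst; lra]. Qed.

Lemma Rle_Rpower_l_nonpos (a b s : R) : 0 < a <= b -> s <= 0 -> Rpower b s <= Rpower a s.
Proof.
  intros Hab Hs. apply exp_le_exp_of_le.
  assert (ln a <= ln b) by (apply ln_le; lra). nra.
Qed.

Lemma Rpower_le_endpoints (t s0 s s1 : R) :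
  s0 <= s <= s1 -> Rpower t s <= Rpower t s0 + Rpower t s1.
Proof.
  intros Hs. unfold Rpower.
  pose proof (exp_pos (s0 * ln t)). pose proof (exp_pos (s1 * ln t)).
  destruct (Rle_dec 0 (ln t)).
  - assert (exp (s * ln t) <= exp (s1 * ln t)) by (apply exp_le_exp_of_le; nra). lra.
  - assert (exp (s * ln t) <= exp (s0 * ln t)) by (apply exp_le_exp_of_le; nra). lra.
Qed.

Lemma pow_le_fact_mul_exp (u : R) (p : nat) : 0 <= u -> u ^ p <= INR (fact p) * exp u.
Proof.
  intros Hu.
  assert (Hterm : u ^ p / INR (fact p) <= exp u).
  { eapply Rle_trans; [| apply (exp_ge_taylor u p Hu)].
    destruct p as [|p]; [simpl; lra|].
    rewrite tech5.
    enough (0 <= sum_f_R0 (fun k => u ^ k / INR (fact k)) p) by lra.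
    apply cond_pos_sum; intro k.
    apply Rdiv_le_0_compat; [apply pow_le; lra | apply INR_fact_lt_0]. }
  pose proof (INR_fact_lt_0 p).
  apply Rmult_le_compat_l with (r := INR (fact p)) in Hterm; [|lra].
  unfold Rdiv in Hterm. rewrite Rmult_comm, Rmult_assoc, Rinv_l in Hterm by lra. lra.
Qed.

Lemma pow_abs_ln_le (t d : R) (p : nat) : 0 < t -> 0 < d ->
  Rabs (ln t) ^ p <= INR (fact p) / d ^ p * (Rpower t d + Rpower t (- d)).
Proof.
  intros Ht Hd.
  assert (Hdp : 0 < d ^ p) by (apply pow_lt; lra).
  assert (Hexp : exp (d * Rabs (ln t)) <= Rpower t d + Rpower t (- d)).
  { unfold Rpower. pose proof (exp_pos (d * ln t)). pose proof (exp_pos (- d * ln t)).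
    destruct (Rle_dec 0 (ln t)).
    - rewrite Rabs_right; lra.
    - rewrite Rabs_left by lra. replace (d * - ln t) with (- d * ln t) by ring. lra. }
  pose proof (pow_le_fact_mul_exp (d * Rabs (ln t)) p
                (Rmult_le_pos _ _ (Rlt_le _ _ Hd) (Rabs_pos _))) as H.
  rewrite Rpow_mult_distr in H.
  apply Rmult_le_reg_l with (d ^ p); [lra|].
  replace (d ^ p * (INR (fact p) / d ^ p * (Rpower t d + Rpower t (- d))))
    with (INR (fact p) * (Rpower t d + Rpower t (- d))) by (field; lra).
  eapply Rle_trans; [exact H|].
  apply Rmult_le_compat_l; [apply pos_INR | exact Hexp].
Qed.

(* Multiplied by [c^-s], [pow_abs_ln_le] produces the exponents [-(s - d)] and [-(s + d)],
   both in [[-s1, -s0]]. *)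
Lemma pow_abs_ln_mul_Rpower_le (p : nat) (a c d s s0 s1 : R) :
  0 < a <= c -> 0 < d -> 0 <= s0 -> s0 <= s - d -> s + d <= s1 ->
  Rabs (ln c) ^ p * Rpower c (- s)
  <= 2 * (INR (fact p) / d ^ p) * (Rpower a (- s0) + Rpower a (- s1)).
Proof.
  intros Hac Hd Hs0 Hlo Hhi.
  assert (HK : 0 <= INR (fact p) / d ^ p)
    by (apply Rdiv_le_0_compat; [apply pos_INR | apply pow_lt; lra]).
  assert (Hc : 0 < c) by lra.
  eapply Rle_trans.
  { apply Rmult_le_compat_r; [left; apply exp_pos | apply (pow_abs_ln_le c d p Hc Hd)]. }
  rewrite (Rmult_comm 2), !Rmult_assoc. apply Rmult_le_compat_l; [exact HK|].
  rewrite Rmult_plus_distr_r, <- !Rpower_plus.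
  eapply Rle_trans.
  { apply Rplus_le_compat;
      apply (Rle_Rpower_l_nonpos a c); lra. }
  pose proof (Rpower_le_endpoints a (- s1) (d + - s) (- s0) ltac:(lra)).
  pose proof (Rpower_le_endpoints a (- s1) (- d + - s) (- s0) ltac:(lra)).
  pose proof (exp_pos (- s0 * ln a)). pose proof (exp_pos (- s1 * ln a)).
  unfold Rpower in *. lra.
Qed.

Lemma Rpower_div_self (t s : R) : 0 < t -> Rpower t s / t = Rpower t (s - 1).
Proof.
  intros Ht. replace (s - 1) with (s + - (1)) by ring.
  rewrite Rpower_plus, Rpower_Ropp, Rpower_1 by exact Ht. reflexivity.
Qed.

Lemma is_derive_Rpower_base (s t : R) : 0 < t ->
  is_derive (fun u => Rpower u s) t (s * Rpower t (s - 1)).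
Proof.
  intros Ht. rewrite <- Rpower_div_self by exact Ht.
  unfold Rpower. auto_derive; [exact Ht | field; lra].
Qed.

Lemma is_derive_continuity_pt (f : R -> R) (x l : R) : is_derive f x l -> continuity_pt f x.
Proof. intros H. apply derivable_continuous_pt. exists l. apply is_derive_Reals, H. Qed.

(* Coquelicot states these over an abstract normed module, where [apply] does not
   unify with the real operations. *)
Lemma ex_series_Rabs_le (a b : nat -> R) :
  (forall n, Rabs (a n) <= b n) -> ex_series b -> ex_series a.
Proof. intros H Eb. exact (ex_series_le a b H Eb). Qed.

Lemma ex_series_Rmult_l (c : R) (a : nat -> R) : ex_series a -> ex_series (fun n => c * a n).
Proof. intros Ea. exact (ex_series_scal_l c a Ea). Qed.

Lemma ex_series_Rplus (a b : nat -> R) :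
  ex_series a -> ex_series b -> ex_series (fun n => a n + b n).
Proof. intros Ea Eb. exact (ex_series_plus a b Ea Eb). Qed.

Lemma ex_series_Rminus (a b : nat -> R) :
  ex_series a -> ex_series b -> ex_series (fun n => a n - b n).
Proof. intros Ea Eb. exact (ex_series_minus a b Ea Eb). Qed.

Lemma is_series_succ (a : nat -> R) (l : R) :
  is_series a l -> is_series (fun k => a (S k)) (l - a O).
Proof.
  intros H. apply is_series_incr_1.
  replace l with (l - a O + a O) in H by ring. exact H.
Qed.

Lemma Series_nonneg (a : nat -> R) : (forall n, 0 <= a n) -> ex_series a -> 0 <= Series a.
Proof.
  intros Ha Ea. replace 0 with (Series (fun n => 0 * a n)) by (rewrite Series_scal_l; ring).
  apply Series_le; [|exact Ea]. intro n; rewrite Rmult_0_l; split; [lra | apply Ha].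
Qed.

Lemma Rabs_Series_le (a c : nat -> R) :
  (forall n, Rabs (a n) <= c n) -> ex_series c -> Rabs (Series a) <= Series c.
Proof.
  intros H Ec.
  assert (Eabs : ex_series (fun n => Rabs (a n)))
    by (apply (ex_series_Rabs_le _ c); [intro n; rewrite Rabs_Rabsolu; apply H | exact Ec]).
  eapply Rle_trans; [apply Series_Rabs, Eabs|].
  apply Series_le; [intro n; split; [apply Rabs_pos | apply H] | exact Ec].
Qed.

Lemma is_series_telescoping (b : nat -> R) :
  is_lim_seq b 0 -> is_series (fun k => b k - b (S k)) (b O).
Proof.
  intros Hb. apply is_series_Reals. intros eps Heps.
  apply is_lim_seq_spec in Hb. destruct (Hb (mkposreal eps Heps)) as [N HN].
  exists N. intros n Hn.
  assert (Hsum : sum_f_R0 (fun k => b k - b (S k)) n = b O - b (S n))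
    by (clear; induction n as [|n IH]; simpl; [|rewrite IH]; ring).
  unfold R_dist. rewrite Hsum.
  specialize (HN (S n) ltac:(lia)). simpl in HN. rewrite Rminus_0_r in HN.
  replace (b O - b (S n) - b O) with (- b (S n)) by ring. rewrite Rabs_Ropp. exact HN.
Qed.

Lemma is_lim_seq_Rpower_shift (s y : R) : 0 < s -> 0 < y ->
  is_lim_seq (fun n => Rpower (INR n + y) (- s)) 0.
Proof.
  intros Hs Hy. apply is_lim_seq_spec. intros eps.
  set (T := exp (- ln eps / s)).
  destruct (archimed T) as [HT _].
  assert (HT0 : 0 <= IZR (up T)) by (pose proof (exp_pos (- ln eps / s)); unfold T in *; lra).
  exists (Z.to_nat (up T)). intros n Hn.
  apply le_INR in Hn. rewrite INR_IZR_INZ, Z2Nat.id in Hn by (apply le_IZR; lra).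
  pose proof (pos_INR n).
  rewrite Rminus_0_r, Rabs_right by (left; apply exp_pos).
  assert (Hln : - ln eps / s < ln (INR n + y)).
  { rewrite <- (ln_exp (- ln eps / s)). apply ln_increasing; [apply exp_pos | fold T; lra]. }
  rewrite <- (exp_ln eps) by apply cond_pos. apply exp_increasing.
  apply Rmult_lt_compat_l with (r := s) in Hln; [|lra].
  unfold Rdiv in Hln. field_simplify in Hln; lra.
Qed.

(* The pairs [(k+y)^{1-p} - (k+1+y)^{1-p}] telescope and, by the mean value theorem,
   dominate [(p-1) (k+1+y)^{-p}]. *)
Lemma ex_series_Rpower_shift (y p : R) : 0 < y -> 1 < p ->
  ex_series (fun k => Rpower (INR k + y) (- p)).
Proof.
  intros Hy Hp.
  set (b := fun k : nat => Rpower (INR k + y) (- (p - 1))).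
  assert (Hb : forall k, 0 <= Rpower (INR (S k) + y) (- p) <= (b k - b (S k)) / (p - 1)).
  { intro k. split; [left; apply exp_pos|].
    pose proof (pos_INR k) as Hk. unfold b. rewrite S_INR.
    destruct (MVT_gen (fun t => Rpower t (- (p - 1))) (INR k + y) (INR k + 1 + y)
                (fun t => - (p - 1) * Rpower t (- p))) as [c [Hc Hm]].
    - intros t Ht. rewrite Rmin_left, Rmax_right in Ht by lra.
      replace (- p) with (- (p - 1) - 1) by ring. apply is_derive_Rpower_base; lra.
    - intros t Ht. rewrite Rmin_left, Rmax_right in Ht by lra.
      eapply is_derive_continuity_pt, is_derive_Rpower_base; lra.
    - rewrite Rmin_left, Rmax_right in Hc by lra.
      replace (INR k + 1 + y - (INR k + y)) with 1 in Hm by ring.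
      assert (Rpower (INR k + 1 + y) (- p) <= Rpower c (- p))
        by (apply Rle_Rpower_l_nonpos; lra).
      apply Rmult_le_reg_l with (p - 1); [lra|].
      replace ((p - 1) * ((Rpower (INR k + y) (- (p - 1))
                           - Rpower (INR k + 1 + y) (- (p - 1))) / (p - 1)))
        with (Rpower (INR k + y) (- (p - 1)) - Rpower (INR k + 1 + y) (- (p - 1)))
        by (field; lra).
      nra. }
  apply ex_series_incr_1.
  apply (ex_series_Rabs_le _ (fun k => (b k - b (S k)) / (p - 1))).
  - intro n. rewrite Rabs_right by (apply Rle_ge, Hb). apply Hb.
  - apply ex_series_scal_r. eexists. apply is_series_telescoping.
    apply is_lim_seq_Rpower_shift; lra.
Qed.

Lemma ex_series_Rpower_even_shift (y p : R) : 0 < y -> 1 < p ->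
  ex_series (fun k => Rpower (2 * INR k + y) (- p)).
Proof.
  intros Hy Hp.
  apply (ex_series_Rabs_le _ (fun k => Rpower (INR k + y) (- p)));
    [| exact (ex_series_Rpower_shift y p Hy Hp)].
  intro k. pose proof (pos_INR k).
  rewrite Rabs_right by (left; apply exp_pos). apply Rle_Rpower_l_nonpos; lra.
Qed.

Lemma ex_series_mul_succ_pow (r : R) : Rabs r < 1 ->
  ex_series (fun n => INR (S n) * INR (S (S n)) * r ^ n).
Proof.
  intros Hr.
  assert (Hone : CV_radius (fun _ => 1) = 1).
  { rewrite (CV_radius_finite_DAlembert _ 1); [now rewrite Rinv_1 | intro; lra | lra|].
    apply is_lim_seq_ext with (fun _ => 1);
      [intro; unfold Rdiv; rewrite Rinv_1, Rmult_1_l, Rabs_R1; reflexivity|].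
    apply is_lim_seq_const. }
  apply ex_series_Rabs.
  apply (ex_series_ext (fun n => Rabs (PS_derive (PS_derive (fun _ => 1)) n * r ^ n))).
  { intro n. unfold PS_derive. rewrite Rmult_1_r, Rmult_assoc. reflexivity. }
  apply CV_disk_inside. rewrite !CV_radius_derive, Hone. exact Hr.
Qed.

Lemma is_series_of_pairs (c : nat -> R) (l : R) :
  is_series (fun k => c (2 * k)%nat + c (S (2 * k))) l -> is_lim_seq c 0 -> is_series c l.
Proof.
  intros HS Hc.
  assert (Hpairs : forall K, sum_f_R0 c (S (2 * K))
                             = sum_f_R0 (fun k => c (2 * k)%nat + c (S (2 * k))) K).
  { induction K as [|K IH]; [simpl; ring|].
    rewrite (tech5 _ K), <- IH. replace (2 * S K)%nat with (S (S (2 * K))) by lia.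
    rewrite !tech5. ring. }
  apply is_series_Reals in HS. apply is_series_Reals. intros eps Heps.
  destruct (HS (eps / 2)) as [N1 HN1]; [lra|].
  apply is_lim_seq_spec in Hc. destruct (Hc (mkposreal (eps / 2) ltac:(lra))) as [N2 HN2].
  exists (2 * N1 + N2 + 2)%nat. intros n Hn. unfold R_dist in *.
  destruct (Nat.Even_or_Odd n) as [[K HK]|[K HK]]; subst n.
  - destruct K as [|K]; [lia|].
    replace (2 * S K)%nat with (S (S (2 * K))) in * by lia.
    rewrite tech5, Hpairs.
    specialize (HN1 K ltac:(lia)). specialize (HN2 (S (S (2 * K))) ltac:(lia)).
    change (Rabs (c (S (S (2 * K))) - 0) < eps / 2) in HN2. rewrite Rminus_0_r in HN2.
    replace (sum_f_R0 (fun k => c (2 * k)%nat + c (S (2 * k))) K + c (S (S (2 * K))) - l)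
      with ((sum_f_R0 (fun k => c (2 * k)%nat + c (S (2 * k))) K - l) + c (S (S (2 * K))))
      by ring.
    eapply Rle_lt_trans; [apply Rabs_triang | lra].
  - replace (2 * K + 1)%nat with (S (2 * K)) by lia. rewrite Hpairs.
    apply Rlt_trans with (eps / 2); [apply HN1; lia | lra].
Qed.

Lemma Series_sum_f_R0_swap (b : nat -> nat -> R) (n : nat) :
  (forall i, ex_series (fun k => b k i)) ->
  ex_series (fun k => sum_f_R0 (fun i => b k i) n)
  /\ Series (fun k => sum_f_R0 (fun i => b k i) n) = sum_f_R0 (fun i => Series (fun k => b k i)) n.
Proof.
  intros H. induction n as [|n [IHe IHs]]; [split; [apply H | reflexivity]|].
  simpl. split; [apply ex_series_Rplus; auto|].
  rewrite Series_plus, IHs; auto.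
Qed.

Lemma Series_tail (a : nat -> R) (n : nat) :
  ex_series a -> Series a - sum_f_R0 a n = Series (fun i => a (S n + i)%nat).
Proof. intros Ea. rewrite (Series_incr_n a (S n)) by (auto; lia). simpl pred. ring. Qed.

Section DoubleSeries.

Variables (b : nat -> nat -> R) (g h : nat -> R).
Hypothesis b_le : forall k i, Rabs (b k i) <= g i * h k.
Hypotheses (g_ge0 : forall i, 0 <= g i) (h_ge0 : forall k, 0 <= h k).
Hypotheses (g_ex : ex_series g) (h_ex : ex_series h).

Let row_ex k : ex_series (fun i => b k i).
Proof. apply (ex_series_Rabs_le _ (fun i => g i * h k)); [auto | apply ex_series_scal_r, g_ex]. Qed.

Let column_ex i : ex_series (fun k => b k i).
Proof.
  apply (ex_series_Rabs_le _ (fun k => g i * h k)); [auto | apply ex_series_Rmult_l, h_ex].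
Qed.

Lemma Rabs_Series_Series_sub_sum_le (n : nat) :
  Rabs (Series (fun k => Series (fun i => b k i))
        - sum_f_R0 (fun i => Series (fun k => b k i)) n)
  <= (Series g - sum_f_R0 g n) * Series h.
Proof.
  destruct (Series_sum_f_R0_swap b n column_ex) as [Esum Hswap].
  assert (Egt : ex_series (fun i => g (S n + i)%nat)) by (apply ex_series_incr_n, g_ex).
  assert (Erow : ex_series (fun k => Series (fun i => b k i))).
  { apply (ex_series_Rabs_le _ (fun k => Series g * h k));
      [| apply ex_series_Rmult_l, h_ex].
    intro k. rewrite <- Series_scal_r.
    apply Rabs_Series_le; [auto | apply ex_series_scal_r, g_ex]. }
  rewrite <- Hswap, <- Series_minus by assumption.
  rewrite (Series_tail g n g_ex), <- (Series_scal_l _ h).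
  apply Rabs_Series_le; [| apply ex_series_Rmult_l, h_ex].
  intro k. rewrite (Series_tail _ n (row_ex k)), <- Series_scal_r.
  apply Rabs_Series_le; [auto | apply ex_series_scal_r, Egt].
Qed.

Lemma is_series_Series_swap :
  is_series (fun i => Series (fun k => b k i)) (Series (fun k => Series (fun i => b k i))).
Proof.
  apply is_series_Reals. intros eps Heps.
  assert (Hh : 0 <= Series h) by (apply Series_nonneg; auto).
  destruct (proj1 (is_series_Reals g (Series g)) (Series_correct g g_ex) (eps / (Series h + 1)))
    as [N HN]; [apply Rdiv_lt_0_compat; lra|].
  exists N. intros n Hn. specialize (HN n Hn). unfold R_dist in *.
  rewrite Rabs_minus_sym. eapply Rle_lt_trans; [apply Rabs_Series_Series_sub_sum_le|].
  assert (Hg : 0 <= Series g - sum_f_R0 g n).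
  { rewrite Series_tail by auto. apply Series_nonneg; [auto | apply ex_series_incr_n, g_ex]. }
  rewrite Rabs_minus_sym, Rabs_right in HN by lra.
  apply Rle_lt_trans with (eps / (Series h + 1) * Series h); [apply Rmult_le_compat_r; lra|].
  apply Rmult_lt_reg_r with (Series h + 1); [lra|].
  replace (eps / (Series h + 1) * Series h * (Series h + 1)) with (eps * Series h)
    by (field; lra).
  nra.
Qed.

End DoubleSeries.

(** * Differentiation under the summation sign *)

Lemma MVT_between (u du : R -> R) (a b z w : R) :
  a < z < b -> a < w < b -> (forall t, a < t < b -> is_derive u t (du t)) ->
  exists c, a < c < b /\ Rabs (c - z) <= Rabs (w - z) /\ u w - u z = du c * (w - z).
Proof.
  intros Hz Hw Hu.
  assert (Hin : forall t, Rmin z w <= t <= Rmax z w -> a < t < b)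
    by (unfold Rmin, Rmax; destruct (Rle_dec z w); intros; lra).
  destruct (MVT_gen u z w du) as [c [Hc Hm]].
  - intros t Ht. apply Hu, Hin. lra.
  - intros t Ht. eapply is_derive_continuity_pt, Hu, Hin, Ht.
  - exists c. split; [apply Hin, Hc|]. split; [|exact Hm].
    revert Hc. unfold Rmin, Rmax. destruct (Rle_dec z w); intros;
      unfold Rabs; repeat destruct Rcase_abs; lra.
Qed.

Lemma Rabs_taylor1_remainder_le (u du d2u : R -> R) (a b z h N : R) :
  a < z < b -> a < z + h < b ->
  (forall t, a < t < b -> is_derive u t (du t)) ->
  (forall t, a < t < b -> is_derive du t (d2u t)) ->
  (forall t, a < t < b -> Rabs (d2u t) <= N) ->
  Rabs (u (z + h) - u z - h * du z) <= h ^ 2 * N.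
Proof.
  intros Hz Hzh Hu Hdu HN.
  destruct (MVT_between u du a b z (z + h) Hz Hzh Hu) as [c [Hc [Hcz Hm]]].
  destruct (MVT_between du d2u a b z c Hz Hc Hdu) as [c' [Hc' [_ Hm']]].
  replace (z + h - z) with h in * by ring.
  replace (u (z + h) - u z - h * du z) with (h * (d2u c' * (c - z))).
  2: { rewrite <- Hm', Hm. ring. }
  rewrite !Rabs_mult, <- (pow2_abs h).
  pose proof (HN c' Hc'). pose proof (Rabs_pos h). pose proof (Rabs_pos (c - z)).
  pose proof (Rabs_pos (d2u c')).
  assert (Rabs (d2u c') * Rabs (c - z) <= N * Rabs h) by (apply Rmult_le_compat; lra).
  nra.
Qed.

Section DeriveSeries.

Variables (u du d2u : nat -> R -> R) (N : nat -> R) (a b : R).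
Hypothesis u_derive : forall k t, a < t < b -> is_derive (u k) t (du k t).
Hypothesis du_derive : forall k t, a < t < b -> is_derive (du k) t (d2u k t).
Hypothesis d2u_le : forall k t, a < t < b -> Rabs (d2u k t) <= N k.
Hypothesis N_ex : ex_series N.
Hypotheses (u_ex : forall t, a < t < b -> ex_series (fun k => u k t))
           (du_ex : forall t, a < t < b -> ex_series (fun k => du k t)).

Lemma Rabs_Series_taylor1_remainder_le (z h : R) : a < z < b -> a < z + h < b ->
  Rabs (Series (fun k => u k (z + h)) - Series (fun k => u k z) - h * Series (fun k => du k z))
  <= h ^ 2 * Series N.
Proof.
  intros Hz Hzh.
  rewrite <- Series_scal_l, <- !Series_minus, <- Series_scal_l.
  - apply Rabs_Series_le; [| apply ex_series_Rmult_l, N_ex].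
    intro k. eapply Rabs_taylor1_remainder_le; eauto.
  - apply ex_series_Rminus; [apply u_ex, Hzh | apply u_ex, Hz].
  - apply ex_series_Rmult_l, du_ex, Hz.
  - exact (u_ex _ Hzh).
  - exact (u_ex _ Hz).
Qed.

Lemma is_derive_Series (z : R) : a < z < b ->
  is_derive (fun t => Series (fun k => u k t)) z (Series (fun k => du k z)).
Proof.
  intros Hz.
  assert (HN : 0 <= Series N).
  { apply Series_nonneg; [|exact N_ex].
    intro k. eapply Rle_trans; [apply Rabs_pos | apply (d2u_le k z Hz)]. }
  apply is_derive_Reals. intros eps Heps.
  set (delta := Rmin (Rmin (z - a) (b - z)) (eps / (Series N + 1))).
  assert (Hdelta : 0 < delta).
  { apply Rmin_glb_lt; [apply Rmin_glb_lt; lra | apply Rdiv_lt_0_compat; lra]. }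
  exists (mkposreal delta Hdelta). intros h Hh0 Hh. simpl in Hh.
  assert (Hh1 : Rabs h < z - a /\ Rabs h < b - z /\ Rabs h < eps / (Series N + 1)).
  { pose proof (Rmin_l (Rmin (z - a) (b - z)) (eps / (Series N + 1))).
    pose proof (Rmin_r (Rmin (z - a) (b - z)) (eps / (Series N + 1))).
    pose proof (Rmin_l (z - a) (b - z)). pose proof (Rmin_r (z - a) (b - z)).
    unfold delta in Hh. lra. }
  assert (Hzh : a < z + h < b) by (revert Hh1; unfold Rabs; destruct Rcase_abs; lra).
  pose proof (Rabs_Series_taylor1_remainder_le z h Hz Hzh) as Hrem.
  assert (Hh2 : 0 < Rabs h) by (apply Rabs_pos_lt, Hh0).
  replace ((Series (fun k => u k (z + h)) - Series (fun k => u k z)) / h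
           - Series (fun k => du k z))
    with ((Series (fun k => u k (z + h)) - Series (fun k => u k z)
           - h * Series (fun k => du k z)) / h) by (field; exact Hh0).
  unfold Rdiv. rewrite Rabs_mult, Rabs_inv.
  apply Rle_lt_trans with (Rabs h * Series N).
  - apply Rmult_le_reg_r with (Rabs h); [exact Hh2|].
    rewrite Rmult_assoc, Rinv_l, Rmult_1_r by lra.
    rewrite <- (pow2_abs h) in Hrem. lra.
  - apply Rle_lt_trans with (eps / (Series N + 1) * Series N);
      [apply Rmult_le_compat_r; lra|].
    apply Rmult_lt_reg_r with (Series N + 1); [lra|].
    replace (eps / (Series N + 1) * Series N * (Series N + 1)) with (eps * Series N)
      by (field; lra).
    nra.
Qed.

End DeriveSeries.

(** * The series of [zeta_E] and of its derivatives *)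

(* [rpowD r w t] is the [r]-th derivative of [w |-> t^-w]. *)
Definition rpowD (r : nat) (w t : R) : R := (- ln t) ^ r * Rpower t (- w).

Definition zeta_pair (r : nat) (w y : R) (k : nat) : R :=
  rpowD r w (2 * INR k + y) - rpowD r w (2 * INR k + y + 1).

Lemma is_derive_rpowD_exponent (r : nat) (w t : R) :
  is_derive (fun s => rpowD r s t) w (rpowD (S r) w t).
Proof. unfold rpowD, Rpower. auto_derive; [exact I | simpl; ring]. Qed.

Lemma is_derive_rpowD_base (r : nat) (w t : R) : 0 < t ->
  is_derive (rpowD r w) t (- (INR r * rpowD (pred r) (w + 1) t + w * rpowD r (w + 1) t)).
Proof.
  intros Ht. unfold rpowD.
  replace (- (w + 1)) with (- w - 1) by ring. rewrite <- !Rpower_div_self by exact Ht.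
  unfold Rpower. auto_derive; [repeat split; exact Ht|].
  destruct r as [|r]; simpl pred; [simpl; field; lra|].
  rewrite S_INR. simpl pow. field. lra.
Qed.

Lemma Rabs_rpowD_le (r : nat) (a c d w s1 : R) :
  0 < a <= c -> 0 < d -> 2 * d <= w -> w + 1 + d <= s1 ->
  Rabs (rpowD r (w + 1) c)
  <= 2 * (INR (fact r) / d ^ r) * (Rpower a (- (1 + d)) + Rpower a (- s1)).
Proof.
  intros Hac Hd Hw Hs1. unfold rpowD.
  rewrite Rabs_mult, <- RPow_abs, Rabs_Ropp, (Rabs_right (Rpower _ _)) by (left; apply exp_pos).
  apply pow_abs_ln_mul_Rpower_le; lra.
Qed.

Lemma Rabs_zeta_pair_le (r : nat) (w y z0 z1 : R) (k : nat) :
  0 < z0 <= w -> w <= z1 -> 0 < y ->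
  Rabs (zeta_pair r w y k)
  <= 2 * (INR r * (INR (fact (pred r)) / (z0 / 2) ^ pred r)
          + z1 * (INR (fact r) / (z0 / 2) ^ r))
     * (Rpower (2 * INR k + y) (- (1 + z0 / 2)) + Rpower (2 * INR k + y) (- (z1 + 1 + z0 / 2))).
Proof.
  intros Hz0 Hz1 Hy.
  set (a := 2 * INR k + y). assert (Ha : 0 < a) by (pose proof (pos_INR k); unfold a; lra).
  set (df := fun t => - (INR r * rpowD (pred r) (w + 1) t + w * rpowD r (w + 1) t)).
  destruct (MVT_gen (rpowD r w) a (a + 1) df) as [c [Hc Hm]].
  - intros t Ht. rewrite Rmin_left, Rmax_right in Ht by lra. apply is_derive_rpowD_base. lra.
  - intros t Ht. rewrite Rmin_left, Rmax_right in Ht by lra.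
    eapply is_derive_continuity_pt, is_derive_rpowD_base. lra.
  - rewrite Rmin_left, Rmax_right in Hc by lra.
    unfold zeta_pair. fold a.
    replace (rpowD r w a - rpowD r w (a + 1)) with (- df c) by lra.
    unfold df. rewrite Rabs_Ropp, Rabs_Ropp.
    eapply Rle_trans; [apply Rabs_triang|].
    rewrite !Rabs_mult, (Rabs_right (INR r)), (Rabs_right w)
      by (apply Rle_ge; try apply pos_INR; lra).
    set (E := Rpower a (- (1 + z0 / 2)) + Rpower a (- (z1 + 1 + z0 / 2))).
    pose proof (Rabs_rpowD_le (pred r) a c (z0 / 2) w (z1 + 1 + z0 / 2)) as Hpred.
    pose proof (Rabs_rpowD_le r a c (z0 / 2) w (z1 + 1 + z0 / 2)) as Hr.
    fold E in Hpred, Hr.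
    pose proof (pos_INR r). pose proof (Rabs_pos (rpowD r (w + 1) c)).
    apply Rle_trans with (INR r * (2 * (INR (fact (pred r)) / (z0 / 2) ^ pred r) * E)
                          + z1 * (2 * (INR (fact r) / (z0 / 2) ^ r) * E)); [|right; ring].
    apply Rplus_le_compat; [apply Rmult_le_compat_l; [lra | apply Hpred; lra]|].
    apply Rmult_le_compat; [lra | lra | lra | apply Hr; lra].
Qed.

Lemma zeta_pair_dominated (r : nat) (z0 z1 y : R) : 0 < z0 <= z1 -> 0 < y ->
  exists M : nat -> R, ex_series M /\
    forall w k, z0 <= w <= z1 -> Rabs (zeta_pair r w y k) <= M k.
Proof.
  intros Hz Hy. eexists. split; cycle 1.
  - intros w k Hw. apply (Rabs_zeta_pair_le r w y z0 z1 k); lra.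
  - apply ex_series_Rmult_l, ex_series_Rplus; apply ex_series_Rpower_even_shift; lra.
Qed.

Lemma ex_series_zeta_pair (r : nat) (w y : R) : 0 < w -> 0 < y -> ex_series (zeta_pair r w y).
Proof.
  intros Hw Hy. destruct (zeta_pair_dominated r w w y ltac:(lra) Hy) as [M [EM HM]].
  apply (ex_series_Rabs_le _ M); [intro k; apply HM; lra | exact EM].
Qed.

Lemma is_series_zetaE_pairs (w y : R) : 0 < w -> 0 < y ->
  is_series (fun n => (-1) ^ n * Rpower (INR n + y) (- w)) (Series (zeta_pair 0 w y)).
Proof.
  intros Hw Hy. apply is_series_of_pairs.
  - apply (is_series_ext (zeta_pair 0 w y)); [| apply Series_correct, ex_series_zeta_pair; auto].
    intro k. unfold zeta_pair, rpowD.
    rewrite <- tech_pow_Rmult, pow_1_even, S_INR, mult_INR.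
    replace (INR 2 * INR k + 1 + y) with (2 * INR k + y + 1) by (simpl; ring).
    replace (INR 2) with 2 by (simpl; ring). simpl. ring.
  - pose proof (is_lim_seq_Rpower_shift w y Hw Hy) as Hlim. apply is_lim_seq_spec in Hlim.
    apply is_lim_seq_spec. intros eps. destruct (Hlim eps) as [N HN].
    exists N. intros n Hn. specialize (HN n Hn). rewrite Rminus_0_r in *.
    rewrite Rabs_mult, pow_1_abs, Rmult_1_l. exact HN.
Qed.

Lemma zetaE_deriv_eq_Series (r : nat) (w y : R) : 0 < w -> 0 < y ->
  zetaE_deriv r w y = Series (zeta_pair r w y).
Proof.
  revert w. induction r as [|r IH]; intros w Hw Hy.
  - apply is_series_unique, is_series_zetaE_pairs; assumption.
  - unfold zetaE_deriv. simpl Derive_n.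
    rewrite (Derive_ext_loc _ (fun s => Series (zeta_pair r s y))).
    2: { apply (filter_imp (fun s => 0 < s)); [intros s Hs; apply IH; assumption|].
         apply (open_gt 0 w Hw). }
    destruct (zeta_pair_dominated (S (S r)) (w / 2) (2 * w) y ltac:(lra) Hy) as [M [EM HM]].
    apply is_derive_unique.
    apply (is_derive_Series (fun k s => zeta_pair r s y k) (fun k s => zeta_pair (S r) s y k)
             (fun k s => zeta_pair (S (S r)) s y k) M (w / 2) (2 * w)); try lra.
    + intros k s _. apply (is_derive_minus (fun s => rpowD r s _) (fun s => rpowD r s _));
        apply is_derive_rpowD_exponent.
    + intros k s _. apply (is_derive_minus (fun s => rpowD (S r) s _) (fun s => rpowD (S r) s _));
        apply is_derive_rpowD_exponent.
    + intros k s Hs. apply HM. lra.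
    + exact EM.
    + intros s Hs. apply ex_series_zeta_pair; lra.
    + intros s Hs. apply ex_series_zeta_pair; lra.
Qed.

(** * Derivatives of [(- ln t)^l / t] *)

Lemma is_derive_sum_f_R0 (f : nat -> R -> R) (df : nat -> R) (x : R) (n : nat) :
  (forall c, is_derive (f c) x (df c)) ->
  is_derive (fun t => sum_f_R0 (fun c => f c t) n) x (sum_f_R0 df n).
Proof.
  intros H. induction n as [|n IH]; [apply H|].
  apply (is_derive_plus (fun t => sum_f_R0 (fun c => f c t) n) (f (S n))); auto.
Qed.

Lemma sum_f_R0_opp (a : nat -> R) (n : nat) : sum_f_R0 (fun c => - a c) n = - sum_f_R0 a n.
Proof. induction n as [|n IH]; simpl; [|rewrite IH]; ring. Qed.

Lemma sum_f_R0_shift (A B : nat -> R) (n : nat) :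
  B O = 0 -> A n = 0 -> (forall c, (c < n)%nat -> B (S c) = A c) ->
  sum_f_R0 B n = sum_f_R0 A n.
Proof.
  intros HB0 HAn HS. destruct n as [|n]; [simpl; lra|].
  rewrite decomp_sum, tech5, HAn, HB0 by lia. simpl pred.
  rewrite Rplus_0_l, Rplus_0_r. apply sum_eq. intros i Hi. apply HS. lia.
Qed.

Lemma Binomial_C_nonneg (l c : nat) : 0 <= Binomial.C l c.
Proof.
  unfold Binomial.C. apply Rdiv_le_0_compat; [apply pos_INR|].
  apply Rmult_lt_0_compat; apply INR_fact_lt_0.
Qed.

Lemma Binomial_C_mul_fact_succ (l c : nat) : (c < l)%nat ->
  Binomial.C l (S c) * INR (fact (S c)) = Binomial.C l c * INR (fact c) * INR (l - c).
Proof.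
  intros H. unfold Binomial.C.
  replace (l - c)%nat with (S (l - S c)) by lia.
  rewrite !fact_simpl, !mult_INR.
  pose proof (INR_fact_neq_0 c). pose proof (INR_fact_neq_0 (l - S c)).
  assert (INR (S c) <> 0) by (apply not_0_INR; lia).
  assert (INR (S (l - S c)) <> 0) by (apply not_0_INR; lia).
  field. auto.
Qed.

Lemma Rabs_stirling1_le (n k : nat) : Rabs (stirling1 n k) <= INR (fact n).
Proof.
  revert k. induction n as [|n IH]; intros [|k]; simpl stirling1.
  - rewrite Rabs_R1. simpl. lra.
  - rewrite Rabs_R0. simpl. lra.
  - rewrite Rabs_R0. apply pos_INR.
  - rewrite fact_simpl, mult_INR, S_INR.
    eapply Rle_trans; [apply Rabs_triang|].
    rewrite Rabs_Ropp, Rabs_mult, (Rabs_right (INR n)) by (apply Rle_ge, pos_INR).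
    pose proof (IH k). pose proof (IH (S k)). pose proof (pos_INR n). nra.
Qed.

Definition lnpow_coef (l m c : nat) : R :=
  Binomial.C l c * (-1) ^ c * INR (fact c) * stirling1 (S m) (S c).

Definition lnpow_poly (l m : nat) (L : R) : R :=
  sum_f_R0 (fun c => lnpow_coef l m c * L ^ (l - c)) l.

(* The [m]-th derivative of [t |-> (- ln t)^l / t]. *)
Definition lnpow_Dn (l m : nat) (t : R) : R := lnpow_poly l m (- ln t) / t ^ S m.

(* [P_(m+1) = - P_m' - (m+1) P_m]: after the shift [c -> c + 1] in [P_m'], this is the
   recurrence of [stirling1] together with [C(l,c+1) (c+1)! = C(l,c) c! (l-c)]. *)
Lemma is_derive_lnpow_poly (l m : nat) (L : R) :
  is_derive (lnpow_poly l m) L (- lnpow_poly l (S m) L - INR (S m) * lnpow_poly l m L).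
Proof.
  set (A := fun c => lnpow_coef l m c * (INR (l - c) * L ^ pred (l - c))).
  set (B := fun c => Binomial.C l c * (-1) ^ c * INR (fact c) * stirling1 (S m) c * L ^ (l - c)).
  assert (HAB : sum_f_R0 B l = - sum_f_R0 A l).
  { rewrite <- sum_f_R0_opp. apply sum_f_R0_shift.
    - unfold B. simpl stirling1. ring.
    - unfold A. rewrite Nat.sub_diag. simpl. ring.
    - intros c Hc. unfold A, B, lnpow_coef.
      replace (pred (l - c)) with (l - S c)%nat by lia.
      rewrite <- tech_pow_Rmult.
      replace (Binomial.C l (S c) * (-1 * (-1) ^ c) * INR (fact (S c)))
        with (- (Binomial.C l (S c) * INR (fact (S c))) * (-1) ^ c) by ring.
      rewrite Binomial_C_mul_fact_succ by exact Hc. ring. }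
  assert (Hsucc : lnpow_poly l (S m) L = sum_f_R0 B l - INR (S m) * lnpow_poly l m L).
  { unfold lnpow_poly. rewrite scal_sum, <- minus_sum. apply sum_eq. intros c _.
    unfold B, lnpow_coef. change (stirling1 (S (S m)) (S c))
      with (stirling1 (S m) c - INR (S m) * stirling1 (S m) (S c)). ring. }
  replace (- lnpow_poly l (S m) L - INR (S m) * lnpow_poly l m L) with (sum_f_R0 A l)
    by (rewrite Hsucc, HAB; ring).
  apply (is_derive_sum_f_R0 (fun c L => lnpow_coef l m c * L ^ (l - c))).
  intro c. unfold A. auto_derive; [exact I | ring].
Qed.

Lemma is_derive_lnpow_Dn (l m : nat) (t : R) : 0 < t ->
  is_derive (lnpow_Dn l m) t (lnpow_Dn l (S m) t).
Proof.
  intros Ht. unfold lnpow_Dn.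
  set (P := lnpow_poly l m). set (L := - ln t).
  assert (HP : is_derive (fun u => P (- ln u)) t
                 (- / t * (- lnpow_poly l (S m) L - INR (S m) * P L))).
  { refine (is_derive_comp P (fun u => - ln u) t _ _ (is_derive_lnpow_poly l m L) _).
    auto_derive; [exact Ht | ring]. }
  assert (Hinv : is_derive (fun u => / u ^ S m) t (- INR (S m) * / t ^ S (S m))).
  { assert (t ^ S m <> 0) by (apply pow_nonzero; lra).
    auto_derive; [exact H|].
    change (match m with 0%nat => 1 | S _ => INR m + 1 end) with (INR (S m)).
    simpl pow. field. split; [apply pow_nonzero|]; lra. }
  eapply is_derive_ext; [intro u; unfold Rdiv; reflexivity|].
  replace (lnpow_poly l (S m) L / t ^ S (S m))
    with (- / t * (- lnpow_poly l (S m) L - INR (S m) * P L) * / t ^ S m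
          + P L * (- INR (S m) * / t ^ S (S m))).
  - exact (Derive.is_derive_mult _ _ t _ _ HP Hinv).
  - unfold L. simpl pow. field. split; [apply pow_nonzero|]; lra.
Qed.

Lemma lnpow_Dn_0 (l : nat) (t : R) : 0 < t -> lnpow_Dn l 0 t = rpowD l 1 t.
Proof.
  intros Ht. unfold lnpow_Dn, rpowD, lnpow_poly.
  rewrite Rpower_Ropp, Rpower_1, pow_1 by exact Ht.
  destruct l as [|l]; [unfold lnpow_coef; simpl; rewrite C_n_0; field; lra|].
  rewrite decomp_sum by lia. simpl pred.
  rewrite (sum_eq _ (fun _ => 0)), sum_cte by (intros i _; unfold lnpow_coef; simpl; ring).
  unfold lnpow_coef. rewrite C_n_0, Nat.sub_0_r. simpl. field. lra.
Qed.

Lemma lnpow_Dn_eq_sum_rpowD (l m : nat) (t : R) : 0 < t ->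
  lnpow_Dn l m t = sum_f_R0 (fun c => lnpow_coef l m c * rpowD (l - c) (INR (S m)) t) l.
Proof.
  intros Ht. unfold lnpow_Dn, lnpow_poly, rpowD.
  rewrite Rpower_Ropp, Rpower_pow by exact Ht.
  unfold Rdiv. rewrite Rmult_comm, scal_sum. apply sum_eq. intros c _. ring.
Qed.

Definition lnpow_majorant (l : nat) (lam : R) : R :=
  sum_f_R0 (fun c => Binomial.C l c * INR (fact c) * lam ^ (l - c)) l.

Lemma lnpow_majorant_nonneg (l : nat) (lam : R) : 0 <= lam -> 0 <= lnpow_majorant l lam.
Proof.
  intros Hlam. apply cond_pos_sum. intro c.
  apply Rmult_le_pos; [apply Rmult_le_pos |apply pow_le, Hlam].
  - apply Binomial_C_nonneg.
  - apply pos_INR.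
Qed.

Lemma Rabs_lnpow_poly_le (l m : nat) (L lam : R) : Rabs L <= lam ->
  Rabs (lnpow_poly l m L) <= INR (fact (S m)) * lnpow_majorant l lam.
Proof.
  intros HL. unfold lnpow_poly, lnpow_majorant. rewrite scal_sum.
  eapply Rle_trans; [apply Rabs_triang_gen|]. apply sum_Rle. intros c _.
  unfold lnpow_coef. rewrite !Rabs_mult, pow_1_abs, <- RPow_abs, Rmult_1_r.
  rewrite (Rabs_right (Binomial.C l c)), (Rabs_right (INR (fact c)))
    by (apply Rle_ge; try apply pos_INR; apply Binomial_C_nonneg).
  pose proof (Binomial_C_nonneg l c). pose proof (pos_INR (fact c)).
  pose proof (Rabs_stirling1_le (S m) (S c)).
  assert (Rabs L ^ (l - c) <= lam ^ (l - c))
    by (apply pow_incr; split; [apply Rabs_pos | exact HL]).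
  pose proof (pow_le (Rabs L) (l - c) (Rabs_pos _)).
  pose proof (Rabs_pos (stirling1 (S m) (S c))).
  rewrite !Rmult_assoc. apply Rmult_le_compat_l; [lra|]. apply Rmult_le_compat_l; [lra|].
  rewrite (Rmult_comm _ (INR (fact (S m)))). apply Rmult_le_compat; lra.
Qed.

Lemma Rabs_lnpow_Dn_le (l m : nat) (t lam : R) : 0 < t -> Rabs (ln t) <= lam ->
  Rabs (lnpow_Dn l m t) <= INR (fact (S m)) * lnpow_majorant l lam / t ^ S m.
Proof.
  intros Ht Hlam. unfold lnpow_Dn, Rdiv.
  rewrite Rabs_mult, Rabs_inv, (Rabs_right (t ^ S m)) by (left; apply pow_lt, Ht).
  apply Rmult_le_compat_r; [left; apply Rinv_0_lt_compat, pow_lt, Ht|].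
  apply Rabs_lnpow_poly_le. rewrite Rabs_Ropp. exact Hlam.
Qed.

(** * Taylor expansion of [(- ln t)^l / t] *)

Definition taylor_sum (D : nat -> R -> R) (X : R) (M : nat) (t : R) : R :=
  sum_f_R0 (fun m => D m t * (X - t) ^ m / INR (fact m)) M.

Section TaylorLagrange.

Variables (D : nat -> R -> R) (a b : R).
Hypothesis D_derive : forall m t, a < t < b -> is_derive (D m) t (D (S m) t).

(* Differentiating in the centre [t], all terms but the last cancel. *)
Lemma is_derive_taylor_sum (X : R) (M : nat) (t : R) : a < t < b ->
  is_derive (taylor_sum D X M) t (D (S M) t * (X - t) ^ M / INR (fact M)).
Proof.
  intros Ht. induction M as [|M IH].
  - replace (D 1 t * (X - t) ^ 0 / INR (fact 0)) with (D 1 t) by (simpl; field).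
    apply (is_derive_ext (D 0)); [intro s; unfold taylor_sum; simpl; field | apply D_derive, Ht].
  - assert (Hsplit : forall s, taylor_sum D X M s + D (S M) s * ((X - s) ^ S M / INR (fact (S M)))
                              = taylor_sum D X (S M) s).
    { intro s. unfold taylor_sum. rewrite (tech5 _ M). unfold Rdiv. ring. }
    apply (is_derive_ext _ _ _ _ Hsplit).
    assert (Hpow : is_derive (fun s => (X - s) ^ S M / INR (fact (S M))) t
                     (- ((X - t) ^ M / INR (fact M)))).
    { rewrite fact_simpl, mult_INR. pose proof (INR_fact_neq_0 M).
      assert (INR (S M) <> 0) by (apply not_0_INR; lia).
      auto_derive; [exact I|].
      change (match M with 0%nat => 1 | S _ => INR M + 1 end) with (INR (S M)).
      match goal with |- ?u = ?v => change (@eq R u v) end. unfold Rminus. field. auto. }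
    replace (D (S (S M)) t * (X - t) ^ S M / INR (fact (S M)))
      with (D (S M) t * (X - t) ^ M / INR (fact M)
            + (D (S (S M)) t * ((X - t) ^ S M / INR (fact (S M)))
               + D (S M) t * (- ((X - t) ^ M / INR (fact M))))) by (unfold Rdiv; ring).
    apply (is_derive_plus (taylor_sum D X M)); [exact IH|].
    exact (Derive.is_derive_mult _ _ t _ _ (D_derive (S M) t Ht) Hpow).
Qed.

Lemma taylor_sum_center (X : R) (M : nat) : taylor_sum D X M X = D 0 X.
Proof.
  induction M as [|M IH]; unfold taylor_sum in *; [simpl; field|].
  rewrite tech5, IH, Rminus_diag, pow_i by lia. unfold Rdiv. ring.
Qed.

Lemma taylor_lagrange_between (A X : R) (M : nat) : a < A < b -> a < X < b ->
  exists c, Rmin A X <= c <= Rmax A X /\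
    D 0 X - taylor_sum D X M A = D (S M) c * (X - c) ^ M / INR (fact M) * (X - A).
Proof.
  intros HA HX.
  assert (Hin : forall t, Rmin A X <= t <= Rmax A X -> a < t < b)
    by (unfold Rmin, Rmax; destruct (Rle_dec A X); intros; lra).
  destruct (MVT_gen (taylor_sum D X M) A X (fun t => D (S M) t * (X - t) ^ M / INR (fact M)))
    as [c [Hc Hm]].
  - intros t Ht. apply is_derive_taylor_sum, Hin. lra.
  - intros t Ht. eapply is_derive_continuity_pt, is_derive_taylor_sum, Hin, Ht.
  - exists c. split; [exact Hc|]. rewrite <- Hm, taylor_sum_center. reflexivity.
Qed.

End TaylorLagrange.

Lemma between_center_bounds (A x c : R) : 0 < A -> Rabs x < A ->
  Rmin A (A + x) <= c <= Rmax A (A + x) ->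
  A - Rabs x <= c <= A + Rabs x /\ Rabs (A + x - c) <= Rabs x / A * c.
Proof.
  intros HA Hx Hc. split.
  - revert Hc. unfold Rmin, Rmax, Rabs.
    destruct (Rle_dec A (A + x)); destruct (Rcase_abs x); intros; lra.
  - apply Rmult_le_reg_r with A; [exact HA|].
    replace (Rabs x / A * c * A) with (Rabs x * c) by (field; lra).
    revert Hc Hx. unfold Rmin, Rmax, Rabs.
    destruct (Rle_dec A (A + x)); repeat destruct Rcase_abs; intros; nra.
Qed.

Lemma Rabs_ln_le_endpoints (lo hi c : R) : 0 < lo -> lo <= c <= hi ->
  Rabs (ln c) <= Rabs (ln lo) + Rabs (ln hi).
Proof.
  intros Hlo Hc.
  assert (ln lo <= ln c) by (apply ln_le; lra).
  assert (ln c <= ln hi) by (apply ln_le; lra).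
  revert H H0. generalize (ln lo) (ln hi) (ln c). intros u v w Hu Hv.
  unfold Rabs. repeat destruct Rcase_abs; lra.
Qed.

Lemma Rabs_lnpow_taylor_remainder_le (l M : nat) (A x : R) : 0 < A -> Rabs x < A ->
  Rabs (lnpow_Dn l 0 (A + x) - taylor_sum (lnpow_Dn l) (A + x) M A)
  <= INR (S M) * INR (S (S M)) * (Rabs x / A) ^ M
     * (lnpow_majorant l (Rabs (ln (A - Rabs x)) + Rabs (ln (A + Rabs x)))
        * Rabs x / (A - Rabs x) ^ 2).
Proof.
  intros HA Hx.
  set (Lam := lnpow_majorant l (Rabs (ln (A - Rabs x)) + Rabs (ln (A + Rabs x)))).
  set (rho := Rabs x / A).
  assert (Hx0 : 0 <= Rabs x) by apply Rabs_pos.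
  destruct (taylor_lagrange_between (lnpow_Dn l) 0 (A + Rabs x + 1)
              (fun m t Ht => is_derive_lnpow_Dn l m t (proj1 Ht)) A (A + x) M)
    as [c [Hc Heq]];
    [lra | revert Hx; unfold Rabs; destruct Rcase_abs; intros; lra |].
  destruct (between_center_bounds A x c HA Hx Hc) as [Hcr Hdist]. fold rho in Hdist.
  assert (Hc0 : 0 < c) by lra.
  pose proof (Rabs_lnpow_Dn_le l (S M) c _ Hc0
                (Rabs_ln_le_endpoints (A - Rabs x) (A + Rabs x) c ltac:(lra) Hcr)) as HD.
  fold Lam in HD.
  assert (Hrho : 0 <= rho) by (apply Rdiv_le_0_compat; lra).
  assert (HLam : 0 <= Lam)
    by (apply lnpow_majorant_nonneg, Rplus_le_le_0_compat; apply Rabs_pos).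
  rewrite Heq. replace (A + x - A) with x by ring.
  unfold Rdiv. rewrite !Rabs_mult, Rabs_inv, <- RPow_abs, (Rabs_right (INR (fact M)))
    by (apply Rle_ge, pos_INR).
  assert (HXc : Rabs (A + x - c) ^ M <= rho ^ M * c ^ M)
    by (rewrite <- Rpow_mult_distr; apply pow_incr; split; [apply Rabs_pos | exact Hdist]).
  eapply Rle_trans.
  { apply Rmult_le_compat_r; [apply Rabs_pos|].
    apply Rmult_le_compat_r; [left; apply Rinv_0_lt_compat, INR_fact_lt_0|].
    apply Rmult_le_compat; [apply Rabs_pos | apply pow_le, Rabs_pos | exact HD | exact HXc]. }
  replace (INR (fact (S (S M))) * Lam / c ^ S (S M) * (rho ^ M * c ^ M) * / INR (fact M) * Rabs x)
    with (INR (S M) * INR (S (S M)) * rho ^ M * (Lam * Rabs x * / c ^ 2)).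
  2: { rewrite !fact_simpl, !mult_INR. replace (S (S M)) with (M + 2)%nat at 3 by lia.
       rewrite pow_add. pose proof (INR_fact_neq_0 M). pose proof (pow_nonzero c M ltac:(lra)).
       field. repeat split; lra. }
  apply Rmult_le_compat_l.
  { apply Rmult_le_pos; [apply Rmult_le_pos; apply pos_INR | apply pow_le, Hrho]. }
  apply Rmult_le_compat_l; [apply Rmult_le_pos; assumption|].
  apply Rinv_le_contravar; [apply pow_lt; lra | apply pow_incr; lra].
Qed.

Lemma is_series_lnpow_taylor (l : nat) (A x : R) : 0 < A -> Rabs x < A ->
  is_series (fun m => x ^ m / INR (fact m) * lnpow_Dn l m A) (lnpow_Dn l 0 (A + x)).
Proof.
  intros HA Hx.
  set (K := lnpow_majorant l (Rabs (ln (A - Rabs x)) + Rabs (ln (A + Rabs x)))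
            * Rabs x / (A - Rabs x) ^ 2).
  assert (Hrho : Rabs (Rabs x / A) < 1).
  { rewrite Rabs_right by (apply Rle_ge, Rdiv_le_0_compat; [apply Rabs_pos | lra]).
    apply Rmult_lt_reg_r with A; [lra|]. unfold Rdiv. rewrite Rmult_assoc, Rinv_l; lra. }
  pose proof (ex_series_lim_0 _ (ex_series_mul_succ_pow _ Hrho)) as Hlim.
  apply (is_lim_seq_scal_r _ K) in Hlim. simpl in Hlim. rewrite Rmult_0_l in Hlim.
  apply is_lim_seq_spec in Hlim.
  apply is_series_Reals. intros eps Heps. destruct (Hlim (mkposreal eps Heps)) as [N HN].
  exists N. intros n Hn. specialize (HN n Hn). simpl in HN. rewrite Rminus_0_r in HN.
  unfold R_dist. rewrite Rabs_minus_sym.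
  replace (sum_f_R0 (fun m => x ^ m / INR (fact m) * lnpow_Dn l m A) n)
    with (taylor_sum (lnpow_Dn l) (A + x) n A)
    by (apply sum_eq; intros i _; replace (A + x - A) with x by ring; unfold Rdiv; ring).
  eapply Rle_lt_trans; [apply Rabs_lnpow_taylor_remainder_le; assumption|].
  eapply Rle_lt_trans; [apply Rle_abs | exact HN].
Qed.

(** * Expanding every pair and exchanging the summations *)

Definition taylor_term (l : nat) (x t : R) (i : nat) : R :=
  x ^ S i / INR (fact (S i)) * lnpow_Dn l (S i) t.

Definition taylor_pair (l : nat) (q x : R) (k i : nat) : R :=
  taylor_term l x (2 * INR k + q) i - taylor_term l x (2 * INR k + q + 1) i.

Lemma is_series_taylor_term (l : nat) (x t : R) : Rabs x < t ->
  is_series (taylor_term l x t) (rpowD l 1 (t + x) - rpowD l 1 t).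
Proof.
  intros Hx. assert (Ht : 0 < t) by (pose proof (Rabs_pos x); lra).
  assert (Htx : 0 < t + x) by (revert Hx; unfold Rabs; destruct Rcase_abs; intros; lra).
  rewrite <- !lnpow_Dn_0 by assumption.
  pose proof (is_series_lnpow_taylor l t x Ht Hx) as H.
  apply is_series_succ in H. simpl in H.
  replace (lnpow_Dn l 0 (t + x) - 1 / 1 * lnpow_Dn l 0 t)
    with (lnpow_Dn l 0 (t + x) - lnpow_Dn l 0 t) in H by field.
  exact H.
Qed.

Lemma is_series_taylor_pair_row (l : nat) (q x : R) (k : nat) : 0 < q -> Rabs x < q ->
  is_series (taylor_pair l q x k) (zeta_pair l 1 (q + x) k - zeta_pair l 1 q k).
Proof.
  intros Hq Hx. pose proof (pos_INR k).
  replace (zeta_pair l 1 (q + x) k - zeta_pair l 1 q k)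
    with ((rpowD l 1 (2 * INR k + q + x) - rpowD l 1 (2 * INR k + q))
          - (rpowD l 1 (2 * INR k + q + 1 + x) - rpowD l 1 (2 * INR k + q + 1)))
    by (unfold zeta_pair; replace (2 * INR k + q + 1 + x) with (2 * INR k + (q + x) + 1) by ring;
        replace (2 * INR k + q + x) with (2 * INR k + (q + x)) by ring; ring).
  apply (is_series_minus (taylor_term l x _) (taylor_term l x _));
    apply is_series_taylor_term; lra.
Qed.

Lemma taylor_pair_eq_sum_zeta_pair (l : nat) (q x : R) (k i : nat) : 0 < q ->
  taylor_pair l q x k i
  = x ^ S i / INR (fact (S i))
    * sum_f_R0 (fun c => lnpow_coef l (S i) c * zeta_pair (l - c) (INR (S (S i))) q k) l.
Proof.
  intros Hq. pose proof (pos_INR k).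
  unfold taylor_pair, taylor_term. rewrite <- Rmult_minus_distr_l. f_equal.
  rewrite !lnpow_Dn_eq_sum_rpowD by lra. rewrite <- minus_sum.
  apply sum_eq. intros c _. unfold zeta_pair. ring.
Qed.

Lemma Series_taylor_pair_column (l : nat) (q x : R) (i : nat) : 0 < q ->
  Series (fun k => taylor_pair l q x k i)
  = x ^ S i / INR (fact (S i))
    * sum_f_R0 (fun c => lnpow_coef l (S i) c * zetaE_deriv (l - c) (INR (S (S i))) q) l.
Proof.
  intros Hq. assert (Hw : 0 < INR (S (S i))) by (apply lt_0_INR; lia).
  rewrite (Series_ext _ _ (fun k => taylor_pair_eq_sum_zeta_pair l q x k i Hq)).
  rewrite Series_scal_l. f_equal.
  assert (Hex : forall c,
            ex_series (fun k => lnpow_coef l (S i) c * zeta_pair (l - c) (INR (S (S i))) q k))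
    by (intro c; apply ex_series_Rmult_l, ex_series_zeta_pair; assumption).
  destruct (Series_sum_f_R0_swap _ l Hex) as [_ ->].
  apply sum_eq. intros c _.
  rewrite Series_scal_l, zetaE_deriv_eq_Series by assumption. reflexivity.
Qed.

Lemma lnpow_majorant_abs_ln_le (l : nat) : exists K, 0 <= K /\
  forall t, 0 < t -> lnpow_majorant l (Rabs (ln t)) <= K * (Rpower t (/ 2) + Rpower t (- / 2)).
Proof.
  exists (sum_f_R0 (fun c => Binomial.C l c * INR (fact c)
                             * (INR (fact (l - c)) / (/ 2) ^ (l - c))) l).
  assert (Hc : forall c, 0 <= Binomial.C l c * INR (fact c))
    by (intro c; apply Rmult_le_pos; [apply Binomial_C_nonneg | apply pos_INR]).
  split.
  - apply cond_pos_sum. intro c. apply Rmult_le_pos; [apply Hc|].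
    apply Rdiv_le_0_compat; [apply pos_INR | apply pow_lt; lra].
  - intros t Ht. unfold lnpow_majorant. rewrite Rmult_comm, scal_sum.
    apply sum_Rle. intros c _. rewrite !Rmult_assoc.
    apply Rmult_le_compat_l; [apply Binomial_C_nonneg|].
    apply Rmult_le_compat_l; [apply pos_INR|]. apply pow_abs_ln_le; lra.
Qed.

Lemma Rpower_sqrt_sum_div_sqr (t : R) : 0 < t ->
  (Rpower t (/ 2) + Rpower t (- / 2)) / t ^ 2 = Rpower t (- (3 / 2)) + Rpower t (- (5 / 2)).
Proof.
  intros Ht. rewrite <- (Rpower_pow 2 t Ht). unfold Rdiv.
  rewrite <- Rpower_Ropp, Rmult_plus_distr_r, <- !Rpower_plus.
  simpl INR. f_equal; f_equal; field.
Qed.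

Lemma Rabs_taylor_term_le (l i : nat) (q t x K : R) : 0 < q <= t -> Rabs x < q ->
  lnpow_majorant l (Rabs (ln t)) <= K * (Rpower t (/ 2) + Rpower t (- / 2)) ->
  Rabs (taylor_term l x t i)
  <= INR (S i) * INR (S (S i)) * (Rabs x / q) ^ i * Rabs x
     * (K * (Rpower t (- (3 / 2)) + Rpower t (- (5 / 2)))).
Proof.
  intros Hqt Hx HK. assert (Ht : 0 < t) by lra.
  set (Lam := lnpow_majorant l (Rabs (ln t))) in HK |- *.
  assert (HLam : 0 <= Lam) by (apply lnpow_majorant_nonneg, Rabs_pos).
  pose proof (Rabs_lnpow_Dn_le l (S i) t _ Ht (Rle_refl _)) as HD. fold Lam in HD.
  assert (Hrho : Rabs x / t <= Rabs x / q)
    by (apply Rmult_le_compat_l; [apply Rabs_pos | apply Rinv_le_contravar; lra]).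
  assert (Hrho0 : 0 <= Rabs x / t) by (apply Rdiv_le_0_compat; [apply Rabs_pos | lra]).
  unfold taylor_term. rewrite Rabs_mult.
  unfold Rdiv at 1. rewrite Rabs_mult, Rabs_inv, <- RPow_abs, (Rabs_right (INR (fact (S i))))
    by (apply Rle_ge, pos_INR).
  eapply Rle_trans.
  { apply Rmult_le_compat_l; [|exact HD].
    apply Rmult_le_pos; [apply pow_le, Rabs_pos | left; apply Rinv_0_lt_compat, INR_fact_lt_0]. }
  replace (Rabs x ^ S i * / INR (fact (S i)) * (INR (fact (S (S i))) * Lam / t ^ S (S i)))
    with (INR (S (S i)) * (Rabs x / t) ^ i * Rabs x * (Lam / t ^ 2)).
  2: { rewrite (fact_simpl (S i)), mult_INR. unfold Rdiv. rewrite Rpow_mult_distr, pow_inv.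
       replace (S (S i)) with (i + 2)%nat at 3 by lia. rewrite pow_add. simpl pow.
       pose proof (INR_fact_neq_0 (S i)). pose proof (pow_nonzero t i ltac:(lra)).
       field. repeat split; lra. }
  rewrite <- (Rpower_sqrt_sum_div_sqr t Ht).
  assert (Hi : INR (S (S i)) <= INR (S i) * INR (S (S i)))
    by (rewrite <- (Rmult_1_l (INR (S (S i)))) at 1; apply Rmult_le_compat_r;
        [apply pos_INR | apply (le_INR 1); lia]).
  assert (Hpow : (Rabs x / t) ^ i <= (Rabs x / q) ^ i) by (apply pow_incr; lra).
  assert (HLt : Lam / t ^ 2 <= K * ((Rpower t (/ 2) + Rpower t (- / 2)) / t ^ 2))
    by (unfold Rdiv; rewrite <- Rmult_assoc; apply Rmult_le_compat_r;
        [left; apply Rinv_0_lt_compat, pow_lt | ]; lra).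
  pose proof (pow_le _ i Hrho0). pose proof (Rabs_pos x). pose proof (pos_INR (S (S i))).
  assert (0 <= Lam / t ^ 2) by (apply Rdiv_le_0_compat; [lra | apply pow_lt; lra]).
  apply Rmult_le_compat; [| lra | | exact HLt].
  - repeat apply Rmult_le_pos; lra.
  - apply Rmult_le_compat_r; [lra|]. apply Rmult_le_compat; lra.
Qed.

Lemma taylor_pair_dominated (l : nat) (q x : R) : 0 < q -> Rabs x < q ->
  exists g h : nat -> R,
    (forall k i, Rabs (taylor_pair l q x k i) <= g i * h k) /\
    (forall i, 0 <= g i) /\ (forall k, 0 <= h k) /\ ex_series g /\ ex_series h.
Proof.
  intros Hq Hx. destruct (lnpow_majorant_abs_ln_le l) as [K [HK0 HK]].
  set (rho := Rabs x / q).
  assert (Hrho : 0 <= rho < 1).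
  { split; [apply Rdiv_le_0_compat; [apply Rabs_pos | lra]|].
    apply Rmult_lt_reg_r with q; [lra|]. unfold rho, Rdiv. rewrite Rmult_assoc, Rinv_l; lra. }
  set (env := fun t => K * (Rpower t (- (3 / 2)) + Rpower t (- (5 / 2)))).
  exists (fun i => INR (S i) * INR (S (S i)) * rho ^ i * Rabs x),
         (fun k => 2 * env (2 * INR k + q)).
  assert (Henv : forall a, 0 < a -> 0 <= env (a + 1) <= env a).
  { intros a Ha. unfold env. pose proof (exp_pos (- (3 / 2) * ln (a + 1))).
    pose proof (exp_pos (- (5 / 2) * ln (a + 1))).
    pose proof (Rle_Rpower_l_nonpos a (a + 1) (- (3 / 2)) ltac:(lra) ltac:(lra)).
    pose proof (Rle_Rpower_l_nonpos a (a + 1) (- (5 / 2)) ltac:(lra) ltac:(lra)).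
    unfold Rpower in *. split; [apply Rmult_le_pos|apply Rmult_le_compat_l]; lra. }
  repeat split.
  - intros k i. pose proof (pos_INR k).
    assert (Hg : 0 <= INR (S i) * INR (S (S i)) * rho ^ i * Rabs x)
      by (pose proof (pow_le _ i (proj1 Hrho)); pose proof (Rabs_pos x);
          repeat apply Rmult_le_pos; try apply pos_INR; lra).
    pose proof (Henv (2 * INR k + q) ltac:(lra)).
    unfold taylor_pair. eapply Rle_trans; [apply Rabs_triang|]. rewrite Rabs_Ropp.
    eapply Rle_trans.
    { apply Rplus_le_compat; apply (Rabs_taylor_term_le l i q); try apply HK; lra. }
    fold rho. fold (env (2 * INR k + q)) (env (2 * INR k + q + 1)).
    assert (INR (S i) * INR (S (S i)) * rho ^ i * Rabs x * env (2 * INR k + q + 1)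
            <= INR (S i) * INR (S (S i)) * rho ^ i * Rabs x * env (2 * INR k + q))
      by (apply Rmult_le_compat_l; lra).
    lra.
  - intro i. pose proof (pow_le _ i (proj1 Hrho)). pose proof (Rabs_pos x).
    repeat apply Rmult_le_pos; try apply pos_INR; lra.
  - intro k. pose proof (pos_INR k). pose proof (Henv (2 * INR k + q) ltac:(lra)). lra.
  - apply ex_series_scal_r.
    apply ex_series_mul_succ_pow. rewrite Rabs_right; lra.
  - apply ex_series_Rmult_l. unfold env. apply ex_series_Rmult_l, ex_series_Rplus;
      apply ex_series_Rpower_even_shift; lra.
Qed.

Theorem theorem3p9 (q x : R) (l : nat) (hq : 0 < q) (hx : Rabs x < q) :
  exists S : R,
    is_series
      (fun i : nat =>
         let j := (i + 2)%nat in
         x ^ (j - 1) / INR (fact (j - 1)) *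
         sum_f_R0
           (fun k : nat =>
              Binomial.C l k * (-1) ^ k * INR (fact k) * stirling1 j (k + 1)
              * zetaE_deriv (l - k) (INR j) q) l)
      S
    /\ mod_stieltjes l (q + x) = mod_stieltjes l q + (-1) ^ l * S.
Proof.
  assert (Hqx : 0 < q + x) by (revert hx; unfold Rabs; destruct Rcase_abs; intros; lra).
  destruct (taylor_pair_dominated l q x hq hx) as (g & h & Hb & Hg & Hh & Eg & Eh).
  exists (Series (fun k => Series (taylor_pair l q x k))). split.
  - eapply is_series_ext; [| exact (is_series_Series_swap _ g h Hb Hg Hh Eg Eh)].
    intro i. cbv zeta. replace (i + 2 - 1)%nat with (S i) by lia.
    replace (i + 2)%nat with (S (S i)) by lia.
    rewrite Series_taylor_pair_column by exact hq. f_equal.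
    apply sum_eq. intros c _. unfold lnpow_coef. rewrite Nat.add_1_r. reflexivity.
  - unfold mod_stieltjes. rewrite !zetaE_deriv_eq_Series by lra.
    rewrite (Series_ext _ _
               (fun k => is_series_unique _ _ (is_series_taylor_pair_row l q x k hq hx))).
    rewrite Series_minus by (apply ex_series_zeta_pair; lra). ring.
Qed.
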